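(* Assume the standing setting (A1)–(A7) described in the context. For sufficiently small $h>0$ and $i\in\{1,2,3,4\}$, let $\bar x_i(h)$ be the abscissa of the unique intersection point of the graph of $g_i$ with $\partial B(h)$, and let $B_h(x):=\sqrt{(a-h)^2-x^2}$. Let $\eta_i(h)\in[0,2\pi)$ be the polar angle of the point $(\bar x_i(h),B_h(\bar x_i(h)))$ if $i\in\{1,2\}$ and of the point $(\bar x_i(h),-B_h(\bar x_i(h)))$ if $i\in\{3,4\}$, and put $\gamma_1(h)=\eta_1(h)$, $\gamma_2(h)=\pi-\eta_2(h)$, $\gamma_3(h)=\eta_3(h)-\pi$, $\gamma_4(h)=2\pi-\eta_4(h)$. Then for each $i\in\{1,2,3,4\}$, $\gamma_i(h)\sim\tau_i h^{1/2}$ as $h\to0$, where $\tau_i=\frac{3}{2a}c_i$ and $c_i=\frac{2q_i\sqrt{2a}}{3\sqrt{4-q_i^2}}$.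
   Context: Standing setting. $f$ is a Lebesgue density on $\mathbb{R}^2$ with compact support $E\subset\mathbb{R}^2$. $|\cdot|$ is the Euclidean norm, $\lambda^2$ Lebesgue measure, $A^\circ$ the interior, $\partial A$ the boundary, $\mathrm{diam}(A)=\sup\{|x-y|:x,y\in A\}$. For $0\le h<a$, $B(h)=\{z\in\mathbb{R}^2:|z|\le a-h\}$; $U(x,\varepsilon)=\{z:|z-(x,0)|<\varepsilon\}$; $Q_1,\dots,Q_4$ are the open quadrants, $Q_1=\{x>0,y>0\}$, numbered anticlockwise; $E_i:=E\cap Q_i$; $f_a(x)=\sqrt{a^2-x^2}/2$. Assumptions: (A1) $a>0$, $\mathrm{diam}(E)=2a$, $\inf\{x:(x,y)\in E\}=-a$, $\sup\{x:(x,y)\in E\}=a$. (A2) For each $\varepsilon>0$, $\mathrm{diam}(E\setminus(U(-a,\varepsilon)\cup U(a,\varepsilon)))<2a$. (A3) For each $\varepsilon>0$, $\lambda^2(E_i\cap U(a,\varepsilon))>0$ for $i\in\{1,4\}$, $\lambda^2(E_j\cap U(-a,\varepsilon))>0$ for $j\in\{2,3\}$. (A4) There are $\nu\in[0,a)$ and continuous $g_1:[\nu,a]\to[0,\infty)$, $g_4:[\nu,a]\to(-\infty,0]$, $g_1(a)=g_4(a)=0$, with $E^\circ\cap\{x>\nu\}=\{(x,y):\nu<x<a,\ g_4(x)<y<g_1(x)\}$, and continuous $g_2:[-a,-\nu]\to[0,\infty)$, $g_3:[-a,-\nu]\to(-\infty,0]$, $g_2(-a)=g_3(-a)=0$, with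 $E^\circ\cap\{x<-\nu\}=\{(x,y):-a<x<-\nu,\ g_3(x)<y<g_2(x)\}$. (A5) Constants $q_1,\dots,q_4\in(0,2)$ with $g_1/f_a\to q_1$, $-g_4/f_a\to q_4$ as $x\to a$ and $g_2/f_a\to q_2$, $-g_3/f_a\to q_3$ as $x\to-a$. (A6) For each $i$ and sufficiently small $h>0$: $E_i^\circ\cap\{|x|<\nu\}\subset B(h)$, and the graph of $g_i$ meets $\partial B(h)$ in exactly one point. (A7) For small $\varepsilon>0$, $f$ is continuous on $E\cap U(\pm a,\varepsilon)$, and $f((a,0))>0$, $f((-a,0))>0$. $g(h)\sim k(h)$ means $g(h)/k(h)\to1$. *)

From HB Require Import structures.
From mathcomp Require Import all_boot all_order all_algebra.
From mathcomp Require Import all_classical all_reals all_analysis.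
Set Implicit Arguments. Unset Strict Implicit. Unset Printing Implicit Defensive.
Import Order.TTheory GRing.Theory Num.Theory.
Import numFieldNormedType.Exports.
Local Open Scope classical_set_scope.
Local Open Scope ring_scope.

Section Defs.
Variable R : realType.
Implicit Types (z w : R * R) (a h x eps nu : R).

Definition lambda2 := ((@lebesgue_measure R) \x (@lebesgue_measure R))%E.

Definition eucl z : R := Num.sqrt (z.1 ^+ 2 + z.2 ^+ 2).
Definition edist z w : R := Num.sqrt ((z.1 - w.1) ^+ 2 + (z.2 - w.2) ^+ 2).

Definition diam (A : set (R * R)) : R :=
  sup [set d | exists z w, A z /\ A w /\ d = edist z w].

Definition bdry (A : set (R * R)) : set (R * R) := closure A `\` interior A.

Definition Bdisk a h : set (R * R) := [set z | eucl z <= a - h].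
Definition Uball x eps : set (R * R) := [set z | edist z (x, 0) < eps].
Definition Q1 : set (R * R) := [set z | 0 < z.1 /\ 0 < z.2].
Definition Q2 : set (R * R) := [set z | z.1 < 0 /\ 0 < z.2].
Definition Q3 : set (R * R) := [set z | z.1 < 0 /\ z.2 < 0].
Definition Q4 : set (R * R) := [set z | 0 < z.1 /\ z.2 < 0].

Definition fa a x : R := Num.sqrt (a ^+ 2 - x ^+ 2) / 2.

Definition graph (g : R -> R) (lo hi : R) : set (R * R) :=
  [set z | lo <= z.1 <= hi /\ z.2 = g z.1].

Definition is_density (f : R * R -> R) :=
  measurable_fun setT f /\ (forall z, 0 <= f z) /\
  (\int[lambda2]_z (f z)%:E = 1)%E.

Definition support (f : R * R -> R) : set (R * R) :=
  [set z | forall e : R, 0 < e ->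
     (0 < \int[lambda2]_(w in [set w | (edist w z < e)%R]) (f w)%:E)%E].

Definition standing (f : R * R -> R) (E : set (R * R)) (a nu : R)
  (g1 g2 g3 g4 : R -> R) (q1 q2 q3 q4 : R) : Prop :=
  [/\ is_density f, E = support f & compact E] /\
  [/\ 0 < a, diam E = 2 * a,
      inf [set x | exists y, E (x, y)] = - a &
      sup [set x | exists y, E (x, y)] = a] /\
  (forall eps, 0 < eps ->
     diam (E `\` (Uball (- a) eps `|` Uball a eps)) < 2 * a) /\
  (forall eps, 0 < eps ->
     [/\ (0 < lambda2 (E `&` Q1 `&` Uball a eps))%E,
         (0 < lambda2 (E `&` Q4 `&` Uball a eps))%E,
         (0 < lambda2 (E `&` Q2 `&` Uball (- a) eps))%E &
         (0 < lambda2 (E `&` Q3 `&` Uball (- a) eps))%E]) /\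
  [/\ 0 <= nu /\ nu < a,
      ({within `[nu, a]%classic, continuous g1}) /\ ({within `[nu, a]%classic, continuous g4}),
      (forall x, nu <= x <= a -> 0 <= g1 x /\ g4 x <= 0),
      g1 a = 0 /\ g4 a = 0 &
      interior E `&` [set z | nu < z.1] =
        [set z | nu < z.1 < a /\ g4 z.1 < z.2 < g1 z.1]] /\
  [/\ ({within `[- a, - nu]%classic, continuous g2}) /\ ({within `[- a, - nu]%classic, continuous g3}),
      (forall x, - a <= x <= - nu -> 0 <= g2 x /\ g3 x <= 0),
      g2 (- a) = 0 /\ g3 (- a) = 0 &
      interior E `&` [set z | z.1 < - nu] =
        [set z | - a < z.1 < - nu /\ g3 z.1 < z.2 < g2 z.1]] /\
  [/\ [/\ 0 < q1 < 2, 0 < q2 < 2, 0 < q3 < 2 & 0 < q4 < 2],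
      (fun x => g1 x / fa a x) @ a^'- --> q1,
      (fun x => - g4 x / fa a x) @ a^'- --> q4,
      (fun x => g2 x / fa a x) @ (- a)^'+ --> q2 &
      (fun x => - g3 x / fa a x) @ (- a)^'+ --> q3] /\
  (\forall h \near 0^'+,
     [/\ interior (E `&` Q1) `&` [set z | `|z.1| < nu] `<=` Bdisk a h,
         interior (E `&` Q2) `&` [set z | `|z.1| < nu] `<=` Bdisk a h,
         interior (E `&` Q3) `&` [set z | `|z.1| < nu] `<=` Bdisk a h &
         interior (E `&` Q4) `&` [set z | `|z.1| < nu] `<=` Bdisk a h] /\
     [/\ exists! p, (graph g1 nu a `&` bdry (Bdisk a h)) p,
         exists! p, (graph g2 (- a) (- nu) `&` bdry (Bdisk a h)) p,
         exists! p, (graph g3 (- a) (- nu) `&` bdry (Bdisk a h)) p &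
         exists! p, (graph g4 nu a `&` bdry (Bdisk a h)) p]) /\
  (\forall eps \near 0^'+,
     ({within E `&` Uball a eps, continuous f}) /\
     ({within E `&` Uball (- a) eps, continuous f})) /\
  0 < f (a, 0) /\ 0 < f (- a, 0).

Definition xbar (g : R -> R) (lo hi a h : R) : R :=
  xget 0 [set x | (graph g lo hi `&` bdry (Bdisk a h)) (x, g x)].

Definition Bh a h x : R := Num.sqrt ((a - h) ^+ 2 - x ^+ 2).

Definition polar_angle z : R :=
  xget 0 [set t | 0 <= t < 2 * pi /\ z.1 = eucl z * cos t /\ z.2 = eucl z * sin t].

Definition eta_up (g : R -> R) lo hi a h : R :=
  let x := xbar g lo hi a h in polar_angle (x, Bh a h x).
Definition eta_down (g : R -> R) lo hi a h : R :=
  let x := xbar g lo hi a h in polar_angle (x, - Bh a h x).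

Definition cconst (q a : R) : R :=
  2 * q * Num.sqrt (2 * a) / (3 * Num.sqrt (4 - q ^+ 2)).
Definition tau (q a : R) : R := 3 / (2 * a) * cconst q a.

End Defs.

From HB Require Import structures.
From mathcomp Require Import all_boot all_order all_algebra.
From mathcomp Require Import all_classical all_reals all_analysis.
From mathcomp Require Import ring lra.
Import Order.TTheory GRing.Theory Num.Theory.
Import numFieldNormedType.Exports.
Local Open Scope classical_set_scope.
Local Open Scope ring_scope.

(* The intersection point of the graph of g_i with the circle of radius a - h
   is (±x, ±y) with x, y > 0, so the angle gamma_i(h) is asin (y / (a - h)).
   Writing rho = y / f_a(x), which tends to q_i as h -> 0, the circle equation
   x^2 + y^2 = (a - h)^2 and y^2 = rho^2 (a^2 - x^2) / 4 give
   y^2 (4 - rho^2) = rho^2 (2a - h) h, hence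
   y / (a - h) ~ q_i sqrt (2a / (4 - q_i^2)) / a * sqrt h = tau_i sqrt h,
   and asin s ~ s.  The left quadrants reduce to the right ones through
   x |-> -x, the lower ones to the upper ones through y |-> -y. *)

Section CircleArcs.
Local Set Implicit Arguments.
Local Unset Strict Implicit.
Variable R : realType.
Implicit Types (t x y r s a h : R).

Lemma sin_gt0_ltpi t : 0 <= t < 2 * pi -> 0 < sin t -> t < pi.
Proof.
move=> /andP[t0 t2] st; rewrite ltNge; apply/negP => pit.
have : 0 <= sin (t - pi) by apply: sin_ge0_pi; apply/andP; split; lra.
by rewrite sinB sinpi cospi; lra.
Qed.

Lemma sin_lt0_gepi t : 0 <= t -> sin t < 0 -> pi <= t.
Proof.
move=> t0 st; rewrite leNgt; apply/negP => tpi.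
have : 0 <= sin t by apply: sin_ge0_pi; apply/andP; split; lra.
lra.
Qed.

Lemma angle_inj t t' : 0 <= t < 2 * pi -> 0 <= t' < 2 * pi ->
  cos t = cos t' -> sin t = sin t' -> sin t != 0 -> t = t'.
Proof.
move=> ht ht' ec es s0; have /andP[t0 t2] := ht; have /andP[t0' t2'] := ht'.
have [sp|sn] := ltP 0 (sin t).
  have sp' : 0 < sin t' by rewrite -es.
  have := sin_gt0_ltpi ht sp; have := sin_gt0_ltpi ht' sp' => ? ?.
  by apply: cos_inj => //; rewrite in_itv /=; apply/andP; split; lra.
have sn' : sin t < 0 by rewrite lt_neqAle s0.
have sn'' : sin t' < 0 by rewrite -es.
have := sin_lt0_gepi t0 sn'; have := sin_lt0_gepi t0' sn'' => ? ?.
suff : t - pi = t' - pi by lra.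
apply: cos_inj; rewrite ?in_itv /=; try (apply/andP; split; lra).
by rewrite !cosB sinpi !mulr0 ec.
Qed.

Lemma eucl_circle x y r : 0 <= r -> x ^+ 2 + y ^+ 2 = r ^+ 2 -> eucl (x, y) = r.
Proof. by move=> r0 xyr; rewrite /eucl /= xyr sqrtr_sqr ger0_norm. Qed.

Lemma polar_angleE x y t : y != 0 -> 0 <= t < 2 * pi ->
  x = eucl (x, y) * cos t -> y = eucl (x, y) * sin t -> polar_angle (x, y) = t.
Proof.
move=> y0 ht xE yE; rewrite /polar_angle; apply: xget_unique => // t' [ht' [xE' yE']].
have e0 : eucl (x, y) != 0 by apply: contraNneq y0 => e0; rewrite yE e0 mul0r.
have s0 : sin t != 0 by apply: contraNneq y0 => s0; rewrite yE s0 mulr0.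
by symmetry; apply: angle_inj => //; apply: (mulfI e0); rewrite -?xE -?yE -?xE' -?yE'.
Qed.

Lemma asin_gt0 s : 0 < s <= 1 -> 0 < asin s.
Proof.
move=> /andP[s0 s1].
have sB : -1 <= s <= 1 by apply/andP; split; lra.
rewrite -(@ltr_sin R) ?in_itv /= ?asinK ?sin0 ?asin_geNpi2 ?asin_lepi2 //.
by rewrite oppr_le0 divr_ge0 // pi_ge0.
Qed.

Lemma polar_angle_circle x y r : 0 < x -> 0 < y -> x ^+ 2 + y ^+ 2 = r ^+ 2 -> 0 < r ->
  [/\ polar_angle (x, y) = asin (y / r),
      polar_angle (- x, y) = pi - asin (y / r),
      polar_angle (- x, - y) = pi + asin (y / r) &
      polar_angle (x, - y) = 2 * pi - asin (y / r)].
Proof.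
move=> x0 y0 xyr r0.
have yr : y < r by nra.
have s01 : 0 < y / r < 1 by rewrite divr_gt0 // ltr_pdivrMr // mul1r.
have sB : -1 <= y / r <= 1 by case/andP: s01 => ? ?; apply/andP; split; lra.
set t := asin (y / r).
have t0 : 0 < t by apply: asin_gt0; case/andP: s01 => ? ?; apply/andP; split; lra.
have tpi : t < pi / 2 by apply: asin_ltpi2; case/andP: s01 => ? ?; apply/andP; split; lra.
have yE : y = r * sin t by rewrite asinK ?in_itv //= mulrC divfK ?gt_eqF.
have xE : x = r * cos t.
  rewrite cos_asin //.
  have -> : 1 - (y / r) ^+ 2 = (x / r) ^+ 2.
    by rewrite !expr_div_n -xyr; field; rewrite xyr expf_neq0 ?gt_eqF.
  by rewrite sqrtr_sqr ger0_norm ?divr_ge0 ?ltW // mulrC divfK ?gt_eqF.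
have pi0 := @pi_gt0 R.
have eNl (u v : R) : eucl (- u, v) = eucl (u, v) by rewrite /eucl /= sqrrN.
have eNr (u v : R) : eucl (u, - v) = eucl (u, v) by rewrite /eucl /= sqrrN.
have er : eucl (x, y) = r := eucl_circle (ltW r0) xyr.
clearbody t; subst x y.
have c2 : cos (2 * pi) = 1 :> R by rewrite mulr_natl cos2pi.
have s2 : sin (2 * pi) = 0 :> R by rewrite mulr_natl sin2pi.
split; apply: polar_angleE; rewrite ?oppr_eq0 ?gt_eqF ?eNl ?eNr ?er //;
  rewrite 1?(cosB pi) 1?(sinB pi) 1?(cosD pi) 1?(sinD pi) 1?(cosB (2 * pi)) 1?(sinB (2 * pi));
  rewrite ?cospi ?sinpi ?c2 ?s2; try (apply/andP; split; lra); ring.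
Qed.

Lemma eucl_scale (k : R) (z : R * R) : eucl (k *: z) = `|k| * eucl z.
Proof.
rewrite /eucl /= -sqrtr_sqr -sqrtrM ?sqr_ge0 //; congr Num.sqrt.
rewrite /GRing.scale /=; ring.
Qed.

Lemma circle_sub_bdry a h (z : R * R) :
  h < a -> eucl z = a - h -> bdry (Bdisk a h) z.
Proof.
move=> ha ez; split; first by apply: subset_closure; rewrite /Bdisk /= ez.
move=> zA.
have scale_cvg : (fun t : R => (1 + t) *: z) @ 0^'+ --> z.
  rewrite -[X in _ --> X]scale1r; apply: cvgZ; last exact: cvg_cst.
  rewrite -[X in _ --> X]addr0; apply: cvgD; first exact: cvg_cst.
  exact: cvg_at_right_filter.
have [t [t0 tA]] : exists t : R, 0 < t /\ Bdisk a h ((1 + t) *: z).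
  apply: (@filter_ex _ _ (at_right_proper_filter 0)); near=> t; split.
  - by near: t; exact: nbhs_right_gt.
  - by near: t; exact: scale_cvg _ zA.
move: tA; rewrite /Bdisk /= eucl_scale ez gtr0_norm; nra.
Unshelve. all: by end_near. Qed.

Lemma xbar_eq (g : R -> R) (lo hi : R) a h x :
  h < a -> lo <= x <= hi -> x ^+ 2 + g x ^+ 2 = (a - h) ^+ 2 ->
  (exists! p, (graph g lo hi `&` bdry (Bdisk a h)) p) -> xbar g lo hi a h = x.
Proof.
move=> ha hx xg [p [_ p_uniq]].
have xgP : (graph g lo hi `&` bdry (Bdisk a h)) (x, g x).
  by split; [split | apply: circle_sub_bdry => //; apply: eucl_circle => //; lra].
rewrite /xbar; apply: xget_unique => // y yP.
by have [] := etrans (esym (p_uniq _ yP)) (p_uniq _ xgP).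
Qed.

Lemma Bh_circle a h x y :
  0 <= y -> x ^+ 2 + y ^+ 2 = (a - h) ^+ 2 -> Bh a h x = y.
Proof.
by move=> y0 xy; rewrite /Bh -xy addrAC subrr add0r sqrtr_sqr ger0_norm.
Qed.

Lemma BhN a h x : Bh a h (- x) = Bh a h x.
Proof. by rewrite /Bh sqrrN. Qed.

Lemma asin_div_cvg : (fun s : R => asin s / s) @ 0^' --> (1 : R).
Proof.
have asin'0 : is_derive (0 : R) 1 asin 1.
  have := @is_derive1_asin R 0; rewrite expr0n subr0 sqrtr1 invr1; apply.
  by rewrite ltrN10 ltr01.
have asin0 : asin (0 : R) = 0.
  by rewrite -{1}sin0 sinK // in_itv /= oppr_le0 divr_ge0 ?pi_ge0.
have /cvg_ex [l asin_l] := @ex_derive _ _ _ _ _ _ _ asin'0.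
have : 'D_1 asin 0 = l by apply: cvg_lim.
rewrite derive_val => l1; move: asin_l; rewrite -l1; apply: cvg_trans.
apply: near_eq_cvg; near=> s.
by rewrite /GRing.scale /= !(mulr1, addr0, asin0, subr0) mulrC.
Unshelve. all: by end_near. Qed.

Lemma cvg_asin_div (T : Type) (F : set_system T) {FF : Filter F}
    (s : T -> R) :
  s @ F --> 0 -> (\forall i \near F, s i != 0) ->
  (fun i => asin (s i) / s i) @ F --> (1 : R).
Proof.
move=> s0 sn0; apply: (cvg_comp _ _ _ asin_div_cvg) => P sP.
by apply: filterS2 sn0 (s0 _ sP) => t st0; apply.
Qed.

Lemma near_left_explicit a (P : R -> Prop) :
  (\forall x \near a^'-, P x) -> exists2 e : R, 0 < e & forall x, a - e < x < a -> P x.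
Proof.
rewrite near_withinE => /nbhs_ballP [e e0 He]; exists e => // x /andP[x1 x2].
by apply: He => //=; rewrite -ball_normE /ball_ /= ger0_norm; lra.
Qed.

Lemma within_continuous_sqrD (A : set R) (g : R -> R) :
  {within A, continuous g} -> {within A, continuous (fun x => x ^+ 2 + g x ^+ 2)}.
Proof.
move=> g_cont x; apply: cvgD.
  by move/continuous_subspaceT: (@exprn_continuous R 2) => /(_ A x).
exact: (cvg_comp _ _ (g_cont x) (@exprn_continuous R 2 (g x))).
Qed.

Lemma fa_gt0 a x : 0 <= x < a -> 0 < fa a x.
Proof. by move=> /andP[x0 xa]; rewrite /fa divr_gt0 // sqrtr_gt0 subr_gt0; nra. Qed.

Lemma fa_sqr a x : x ^+ 2 <= a ^+ 2 -> fa a x ^+ 2 = (a ^+ 2 - x ^+ 2) / 4.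
Proof.
by move=> xa; rewrite /fa expr_div_n sqr_sqrtr ?subr_ge0 //; congr (_ / _); ring.
Qed.

(* Eliminating a^2 - x^2 = (2a - h) h + y^2 gives y^2 (4 - rho^2) = rho^2 (2a - h) h. *)
Lemma circle_height a h x y (rho : R) :
  0 <= x < a -> 0 <= h <= a -> 0 <= rho < 2 ->
  y = rho * fa a x -> x ^+ 2 + y ^+ 2 = (a - h) ^+ 2 ->
  y = rho * Num.sqrt ((2 * a - h) / (4 - rho ^+ 2)) * Num.sqrt h.
Proof.
move=> /andP[x0 xa] /andP[h0 ha] /andP[r0 r2] yE circ.
have r4 : 0 < 4 - rho ^+ 2 by nra.
have y0 : 0 <= y by rewrite yE mulr_ge0 // ltW // fa_gt0 // x0.
have y2 : y ^+ 2 = (rho ^+ 2 * ((2 * a - h) / (4 - rho ^+ 2)) * h).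
  have : y ^+ 2 * 4 = rho ^+ 2 * (a ^+ 2 - x ^+ 2).
    by rewrite yE exprMn fa_sqr ?(ltW (ltrXn2r _ _ _)); [field | nra].
  move=> y4; apply: (mulIf (lt0r_neq0 r4)).
  have -> : rho ^+ 2 * ((2 * a - h) / (4 - rho ^+ 2)) * h * (4 - rho ^+ 2) =
            rho ^+ 2 * (2 * a - h) * h by field; rewrite gt_eqF.
  have := congr1 (fun t => rho ^+ 2 * t) circ; rewrite /=; nra.
have K0 : 0 <= (2 * a - h) / (4 - rho ^+ 2) by rewrite divr_ge0 //; lra.
rewrite -[y](ger0_norm y0) -sqrtr_sqr y2 sqrtrM ?(mulr_ge0 (sqr_ge0 rho) K0) //.
by rewrite sqrtrM ?sqr_ge0 // sqrtr_sqr ger0_norm.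
Qed.

(* The quotient (y / (a - h)) / sqrt h in terms of rho = y / fa a x, by [circle_height]. *)
Definition height_ratio a h r : R :=
  r * Num.sqrt ((2 * a - h) / (4 - r ^+ 2)) / (a - h).

Lemma height_ratio0 a (q : R) :
  0 < a -> 0 < q < 2 -> height_ratio a 0 q = tau q a.
Proof.
move=> a0 /andP[q0 q2]; have q4 : 0 < 4 - q ^+ 2 by nra.
rewrite /height_ratio /tau /cconst subr0 sqrtrM ?sqrtrV; try lra.
by field; rewrite !gt_eqF ?sqrtr_gt0.
Qed.

Lemma height_ratio_cvg a (q : R) (rho : R -> R) :
  0 < a -> 0 < q < 2 -> rho @ 0^'+ --> q ->
  (fun h => height_ratio a h (rho h)) @ 0^'+ --> height_ratio a 0 q.
Proof.
move=> a0 /andP[q0 q2] rho_q; have q4 : 4 - q ^+ 2 != 0 by rewrite gt_eqF //; nra.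
have h0 : (fun h : R => h) @ 0^'+ --> (0 : R) by exact: cvg_at_right_filter.
apply: cvgM; last by apply: cvgV; [rewrite subr0 gt_eqF | apply: cvgB => //; exact: cvg_cst].
apply: cvgM => //; apply: (continuous_cvg _ (@sqrt_continuous R _)).
apply: cvgM; first by apply: cvgB => //; exact: cvg_cst.
apply: cvgV => //; apply: cvgB; first exact: cvg_cst.
exact: (cvg_comp _ _ rho_q (@exprn_continuous R 2 q)).
Qed.

Section RightArc.
Variables (a nu q : R) (g X : R -> R).
Hypotheses (nu_ge0 : 0 <= nu) (nu_lt_a : nu < a) (q_gt0 : 0 < q) (q_lt2 : q < 2)
  (g_cont : {within `[nu, a], continuous g})
  (g_ratio : (fun x => g x / fa a x) @ a^'- --> q)
  (X_root : \forall h \near 0^'+, forall x, nu <= x <= a ->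
     x ^+ 2 + g x ^+ 2 = (a - h) ^+ 2 -> X h = x).

Let a_gt0 : 0 < a. Proof. exact: le_lt_trans nu_ge0 nu_lt_a. Qed.

Lemma ratio_near_left : \forall x \near a^'-, 0 < x /\ 0 < g x / fa a x < 2.
Proof.
near=> x; split; [|apply/andP; split]; near: x.
- exact: nbhs_left_gt a_gt0.
- exact: cvgr_gt g_ratio _ q_gt0.
- exact: cvgr_lt g_ratio _ q_lt2.
Unshelve. all: by end_near. Qed.

(* g / fa tends to q < 2, and g < 2 fa means x^2 + g x^2 < a^2. *)
Lemma inside_disc_near_a d : 0 < d ->
  exists x0, [/\ nu < x0, a - d < x0, x0 < a & x0 ^+ 2 + g x0 ^+ 2 < a ^+ 2].
Proof.
move=> d0; apply: (@filter_ex _ _ (at_left_proper_filter a)).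
near=> x; have [x0 /andP[r0 r2]] : 0 < x /\ 0 < g x / fa a x < 2.
  by near: x; exact: ratio_near_left.
have xa : x < a by near: x; exact: nbhs_left_lt.
have fa0 : 0 < fa a x by rewrite fa_gt0 // ltW.
have gE : g x = g x / fa a x * fa a x by rewrite divfK ?gt_eqF.
split; [near: x; exact: nbhs_left_gt | near: x; apply: nbhs_left_gt; lra | by [] |].
rewrite gE exprMn fa_sqr; last nra.
move: r0 r2; set rho := g x / fa a x => r0 r2.
have : 0 < (a ^+ 2 - x ^+ 2) * (4 - rho ^+ 2) by apply: mulr_gt0; nra.
lra.
Unshelve. all: by end_near. Qed.

Lemma root_near_a d : 0 < d -> \forall h \near 0^'+,
  [/\ a - d < X h, X h < a & X h ^+ 2 + g (X h) ^+ 2 = (a - h) ^+ 2].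
Proof.
move=> d0; have [x0 [nu_x0 d_x0 x0_a inside]] := inside_disc_near_a d0.
set phi := fun x => x ^+ 2 + g x ^+ 2.
have phi_cont : {within `[x0, a], continuous phi}.
  apply: within_continuous_sqrD; apply: continuous_subspaceW g_cont => y.
  by rewrite /= !in_itv /= => /andP[? ?]; apply/andP; split; lra.
pose r := Num.sqrt (phi x0).
have r0 : 0 <= r := sqrtr_ge0 _.
have rE : r ^+ 2 = x0 ^+ 2 + g x0 ^+ 2 by rewrite sqr_sqrtr // addr_ge0 ?sqr_ge0.
have ra : r < a by have := a_gt0; nra.
move: X_root; apply: filter_app; near=> h => X_rootP.
have h0 : 0 < h by near: h; exact: nbhs_right_gt.
have hr : h < a - r by near: h; apply: nbhs_right_lt; lra.
have phia : a ^+ 2 <= phi a by rewrite /phi lerDl sqr_ge0.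
have phix0 : phi x0 < (a - h) ^+ 2 by rewrite /phi -rE; nra.
have [c /[!in_itv] /= /andP[c1 c2] phic] : exists2 c, c \in `[x0, a] & phi c = (a - h) ^+ 2.
  apply: IVT (ltW x0_a) phi_cont _; rewrite ge_min le_max.
  by apply/andP; split; apply/orP; [left | right]; nra.
have Xc : X h = c by apply: X_rootP => //; apply/andP; split; lra.
have ca : c != a by apply: contra_eqN phic => /eqP ->; rewrite gt_eqF //; nra.
by rewrite Xc; split; [lra | rewrite lt_neqAle ca | exact: phic].
Unshelve. all: by end_near. Qed.

Lemma root_cvg : X @ 0^'+ --> a^'-.
Proof.
move=> P /near_left_explicit [e e0 eP].
by apply: filterS (root_near_a e0) => h [? ? _]; apply: eP; apply/andP.
Qed.

Lemma root_props : \forall h \near 0^'+,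
  [/\ 0 < h < a, 0 < X h < a, 0 < g (X h) / fa a (X h) < 2 &
      X h ^+ 2 + g (X h) ^+ 2 = (a - h) ^+ 2].
Proof.
near=> h; have [X0 rhoP] : 0 < X h /\ 0 < g (X h) / fa a (X h) < 2.
  by near: h; exact: (root_cvg ratio_near_left).
have [_ Xa circ] : [/\ a - 1 < X h, X h < a & X h ^+ 2 + g (X h) ^+ 2 = (a - h) ^+ 2].
  by near: h; exact: root_near_a ltr01.
have h0 : 0 < h by near: h; exact: nbhs_right_gt.
have ha : h < a by near: h; exact: nbhs_right_lt.
by split => //; apply/andP.
Unshelve. all: by end_near. Qed.

Lemma asin_root_cvg :
  (fun h => asin (g (X h) / (a - h)) / (tau q a * Num.sqrt h)) @ 0^'+ --> (1 : R).
Proof.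
pose rho h := g (X h) / fa a (X h).
pose s h := g (X h) / (a - h).
have a0 := a_gt0; have q02 : 0 < q < 2 by apply/andP.
have hr_cvg := height_ratio_cvg a0 q02 (cvg_comp _ _ root_cvg g_ratio : rho @ _ --> _).
rewrite (height_ratio0 a0 q02) in hr_cvg.
have tau0 : 0 < tau q a.
  rewrite -(height_ratio0 a0 q02) /height_ratio !subr0 divr_gt0 //.
  by apply: mulr_gt0 => //; rewrite sqrtr_gt0 divr_gt0 //; nra.
have s_eq : \forall h \near 0^'+, 0 < s h /\ s h = height_ratio a h (rho h) * Num.sqrt h.
  apply: filterS root_props => h [/andP[h0 ha] /andP[X0 Xa] /andP[r0 r2] circ].
  have fa0 : 0 < fa a (X h) by rewrite fa_gt0 // ltW.
  have gE : g (X h) = rho h * fa a (X h) by rewrite divfK ?gt_eqF.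
  split; first by rewrite /s divr_gt0 ?subr_gt0 // gE mulr_gt0.
  have rhoP : 0 <= rho h < 2 by rewrite ltW.
  rewrite /s (circle_height _ _ rhoP gE circ); try (apply/andP; split; lra).
  by rewrite /height_ratio mulrAC.
have sqrt_cvg : Num.sqrt @ (0 : R)^'+ --> (0 : R).
  rewrite -[X in _ --> X]sqrtr0.
  exact: cvg_at_right_filter (@sqrt_continuous R 0).
have s_cvg : s @ 0^'+ --> (0 : R).
  rewrite -[X in _ --> X](mulr0 (tau q a)); apply: cvg_trans _ (cvgM hr_cvg sqrt_cvg).
  by apply: near_eq_cvg; apply: filterS s_eq => h [_ ->].
have s_tau : (fun h => s h / (tau q a * Num.sqrt h)) @ 0^'+ --> (1 : R).
  rewrite -[X in _ --> X](mulfV (lt0r_neq0 tau0)).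
  apply: cvg_trans _ (cvgM hr_cvg (cvg_cst (tau q a)^-1)).
  apply: near_eq_cvg; apply: filterS2 (nbhs_right_gt 0) s_eq => h h0 [_ ->].
  by rewrite /= [in RHS]invfM [in RHS]mulrACA mulfV ?mulr1 // gt_eqF ?sqrtr_gt0.
have sn0 : \forall h \near 0^'+, s h != 0 by apply: filterS s_eq => h [/lt0r_neq0].
rewrite -[X in _ --> X]mulr1; apply: cvg_trans _ (cvgM (cvg_asin_div s_cvg sn0) s_tau).
by apply: near_eq_cvg; apply: filterS sn0 => h sh0; rewrite /= mulrA divfK.
Unshelve. all: by end_near. Qed.

Lemma arc_angle_cvg (E : R -> R) :
  (\forall h \near 0^'+, h < a -> 0 < X h -> 0 < g (X h) ->
     X h ^+ 2 + g (X h) ^+ 2 = (a - h) ^+ 2 -> E h = asin (g (X h) / (a - h))) ->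
  (fun h => E h / (tau q a * Num.sqrt h)) @ 0^'+ --> (1 : R).
Proof.
move=> EE; apply: cvg_trans _ asin_root_cvg; apply: near_eq_cvg.
move: EE; apply: filter_app; apply: filterS root_props.
move=> h [/andP[_ ha] /andP[X0 Xa] /andP[r0 _] circ] EE.
have fa0 : 0 < fa a (X h) by rewrite fa_gt0 // ltW.
have g0 : 0 < g (X h) by rewrite -[g (X h)](divfK (lt0r_neq0 fa0)) mulr_gt0.
by rewrite /= EE.
Qed.

End RightArc.

Lemma fa_oppr a x : fa a (- x) = fa a x.
Proof. by rewrite /fa sqrrN. Qed.

Lemma xbar_root (g : R -> R) (lo hi : R) a : 0 < a ->
  (\forall h \near 0^'+, exists! p, (graph g lo hi `&` bdry (Bdisk a h)) p) ->
  \forall h \near 0^'+, forall x, lo <= x <= hi ->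
    x ^+ 2 + g x ^+ 2 = (a - h) ^+ 2 -> xbar g lo hi a h = x.
Proof.
by move=> a0; apply: filterS2 (nbhs_right_lt a0) => h ha U x hx circ; apply: xbar_eq.
Qed.

Lemma xbar_rootN (g : R -> R) (nu : R) a : 0 < a ->
  (\forall h \near 0^'+, exists! p, (graph g (- a) (- nu) `&` bdry (Bdisk a h)) p) ->
  \forall h \near 0^'+, forall x, nu <= x <= a ->
    x ^+ 2 + g (- x) ^+ 2 = (a - h) ^+ 2 -> - xbar g (- a) (- nu) a h = x.
Proof.
move=> a0 /(xbar_root a0); apply: filterS => h xbarP x hx circ.
by rewrite (xbarP (- x)) ?opprK ?sqrrN // !lerN2 andbC.
Qed.

Lemma ratio_at_leftN (g : R -> R) a (q : R) :
  (fun x => g x / fa a x) @ (- a)^'+ --> q -> (fun x => g (- x) / fa a x) @ a^'- --> q.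
Proof.
move=> g_ratio; apply/cvg_at_leftNP; apply: cvg_trans _ g_ratio.
by apply: near_eq_cvg; apply: nearW => x /=; rewrite opprK fa_oppr.
Qed.

Section Quadrants.
Variables (a nu q : R) (g : R -> R).
Hypotheses (nu_ge0 : 0 <= nu) (nu_lt_a : nu < a) (q_gt0 : 0 < q) (q_lt2 : q < 2).

Let a_gt0 : 0 < a. Proof. exact: le_lt_trans nu_ge0 nu_lt_a. Qed.

Lemma eta_up_right_cvg :
  {within `[nu, a], continuous g} -> (fun x => g x / fa a x) @ a^'- --> q ->
  (\forall h \near 0^'+, exists! p, (graph g nu a `&` bdry (Bdisk a h)) p) ->
  (fun h => eta_up g nu a a h / (tau q a * Num.sqrt h)) @ 0^'+ --> (1 : R).
Proof.
move=> g_cont g_ratio U.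
apply: (arc_angle_cvg nu_ge0 nu_lt_a q_gt0 q_lt2 g_cont g_ratio (xbar_root a_gt0 U)).
apply: nearW => h ha X0 g0 circ; have r0 : 0 < a - h by rewrite subr_gt0.
rewrite /eta_up /= (Bh_circle (ltW g0) circ).
by have [-> _ _ _] := polar_angle_circle X0 g0 circ r0.
Qed.

Lemma eta_down_right_cvg :
  {within `[nu, a], continuous g} -> (fun x => - g x / fa a x) @ a^'- --> q ->
  (\forall h \near 0^'+, exists! p, (graph g nu a `&` bdry (Bdisk a h)) p) ->
  (fun h => (2 * pi - eta_down g nu a a h) / (tau q a * Num.sqrt h)) @ 0^'+ --> (1 : R).
Proof.
move=> g_cont g_ratio U.
have gN_cont : {within `[nu, a], continuous (fun x => - g x)}.
  by move=> x; apply: cvgN; exact: g_cont.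
apply: (arc_angle_cvg nu_ge0 nu_lt_a q_gt0 q_lt2 gN_cont g_ratio (X := xbar g nu a a)).
  by apply: filterS (xbar_root a_gt0 U) => h xbarP x hx; rewrite sqrrN; exact: xbarP.
apply: nearW => h ha X0 g0 circ; have r0 : 0 < a - h by rewrite subr_gt0.
rewrite /eta_down /= (Bh_circle (ltW g0) circ).
by have [_ _ _ ->] := polar_angle_circle X0 g0 circ r0; rewrite opprB addrC subrK.
Qed.

Lemma eta_up_left_cvg :
  {within `[- a, - nu], continuous g} -> (fun x => g x / fa a x) @ (- a)^'+ --> q ->
  (\forall h \near 0^'+, exists! p, (graph g (- a) (- nu) `&` bdry (Bdisk a h)) p) ->
  (fun h => (pi - eta_up g (- a) (- nu) a h) / (tau q a * Num.sqrt h)) @ 0^'+ --> (1 : R).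
Proof.
move=> g_cont g_ratio U.
apply: (arc_angle_cvg nu_ge0 nu_lt_a q_gt0 q_lt2 (within_continuous_compN g_cont)
  (ratio_at_leftN g_ratio) (xbar_rootN a_gt0 U)).
apply: nearW => h ha; set x := - xbar _ _ _ _ h => X0 g0 circ.
have r0 : 0 < a - h by rewrite subr_gt0.
rewrite /eta_up /= -[xbar _ _ _ _ h]opprK -/x BhN (Bh_circle (ltW g0) circ).
by have [_ -> _ _] := polar_angle_circle X0 g0 circ r0; rewrite opprB addrC subrK.
Qed.

Lemma eta_down_left_cvg :
  {within `[- a, - nu], continuous g} -> (fun x => - g x / fa a x) @ (- a)^'+ --> q ->
  (\forall h \near 0^'+, exists! p, (graph g (- a) (- nu) `&` bdry (Bdisk a h)) p) ->
  (fun h => (eta_down g (- a) (- nu) a h - pi) / (tau q a * Num.sqrt h)) @ 0^'+ --> (1 : R).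
Proof.
move=> g_cont g_ratio U.
have gN_cont : {within `[nu, a], continuous (fun x => - g (- x))}.
  by move=> x; apply: cvgN; exact: within_continuous_compN g_cont x.
apply: (arc_angle_cvg nu_ge0 nu_lt_a q_gt0 q_lt2 gN_cont
  (ratio_at_leftN g_ratio) (X := fun h => - xbar g (- a) (- nu) a h)).
  by apply: filterS (xbar_rootN a_gt0 U) => h xbarP x hx; rewrite sqrrN; exact: xbarP.
apply: nearW => h ha; set x := - xbar _ _ _ _ h => X0 g0 circ.
have r0 : 0 < a - h by rewrite subr_gt0.
rewrite /eta_down /= -[xbar _ _ _ _ h]opprK -/x BhN (Bh_circle (ltW g0) circ).
by have [_ _ -> _] := polar_angle_circle X0 g0 circ r0; rewrite addrC addKr.
Qed.

End Quadrants.

End CircleArcs.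

Theorem lemma2 (R : realType) (f : R * R -> R) (E : set (R * R)) (a nu : R)
  (g1 g2 g3 g4 : R -> R) (q1 q2 q3 q4 : R) :
  standing f E a nu g1 g2 g3 g4 q1 q2 q3 q4 ->
  [/\ (fun h => eta_up g1 nu a a h / (tau q1 a * Num.sqrt h)) @ 0^'+ --> (1 : R),
      (fun h => (pi - eta_up g2 (- a) (- nu) a h) / (tau q2 a * Num.sqrt h))
        @ 0^'+ --> (1 : R),
      (fun h => (eta_down g3 (- a) (- nu) a h - pi) / (tau q3 a * Num.sqrt h))
        @ 0^'+ --> (1 : R) &
      (fun h => (2 * pi - eta_down g4 nu a a h) / (tau q4 a * Num.sqrt h))
        @ 0^'+ --> (1 : R)].
Proof.
move=> [_ [_ [_ [_ [[[nu0 nua] [c1 c4] _ _ _] [[[c2 c3] _ _ _]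
  [[[/andP[q10 q12] /andP[q20 q22] /andP[q30 q32] /andP[q40 q42]] l1 l4 l2 l3]
  [A6 _]]]]]]]].
split.
- by apply: eta_up_right_cvg => //; apply: filterS A6 => h [_ []].
- by apply: eta_up_left_cvg => //; apply: filterS A6 => h [_ []].
- by apply: eta_down_left_cvg => //; apply: filterS A6 => h [_ []].
- by apply: eta_down_right_cvg => //; apply: filterS A6 => h [_ []].
Qed.
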